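(* Let $G$ be a finite simple graph with at least $3$ vertices. If $\delta(G) \ge \widetilde{\alpha}(G)$, then $G$ is Hamiltonian.
   Context: $\delta(G)$ denotes the minimum degree of $G$. For disjoint vertex sets $S,T$, $E(S,T)$ is the set of edges with one end in $S$ and one in $T$. An $(s,t)$-bipartite-hole in $G$ consists of two disjoint sets of vertices $S$ and $T$ with $|S|=s$, $|T|=t$ and $E(S,T)=\emptyset$. The bipartite-hole-number $\widetilde{\alpha}(G)$ is the least integer $r$ which can be written as $r=s+t-1$ for some positive integers $s,t$ such that $G$ contains no $(s,t)$-bipartite-hole. (Equivalently, $\widetilde{\alpha}(G)$ is the maximum integer $r$ such that $G$ contains an $(s,t)$-bipartite-hole for every pair of non-negative integers $s,t$ with $s+t=r$.) *)

(* A finite simple graph is a symmetric irreflexive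
   relation [e : rel V] on a finite type [V]. *)
From mathcomp Require Import all_boot.
Set Implicit Arguments. Unset Strict Implicit. Unset Printing Implicit Defensive.

Section BHole.
Variables (V : finType) (e : rel V).

Definition deg (v : V) : nat := #|[set u | e v u]|.

(* minimum degree delta(G); the neutral element #|V| exceeds every degree
   of a loopless graph, so for nonempty V this is the true minimum. *)
Definition mindeg : nat := \big[minn/#|V|]_(v : V) deg v.

Definition has_bhole (s t : nat) : bool :=
  [exists S : {set V}, exists T : {set V},
     [&& [disjoint S & T], #|S| == s, #|T| == t &
         [forall x in S, forall y in T, ~~ e x y]]].

(* r can be written as s + t - 1 with s, t >= 1 and G has no (s,t)-hole *)
Definition bh_witness (r : nat) : bool :=
  [exists s : 'I_r.+1, (0 < s) && ~~ has_bhole s (r.+1 - s)].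

Lemma bh_witness_exists : exists r, bh_witness r.
Proof.
exists #|V|.+1; apply/existsP.
have Hs : #|V|.+1 < #|V|.+2 by [].
exists (Ordinal Hs) => /=.
apply/negP => /existsP [S /existsP [T /and4P [_ /eqP HS _ _]]].
by move: (max_card S); rewrite HS ltnn.
Qed.

Definition bhn : nat := ex_minn bh_witness_exists.

End BHole.

Definition hamiltonian (V : finType) (e : rel V) : Prop :=
  exists s : seq V, [/\ uniq s, (forall v, v \in s) & path.cycle e s].

(* Choose [s <= t] with [s + t - 1 = bhn]: there is no (s,t)-bipartite hole
   and every degree is at least [s + t - 1].  Let [c] be a longest cycle and
   suppose a vertex lies off it; then some vertex [h] off [c] has a neighbour
   on [c].  Let [H] be the component of [h] in [G - c] and [X] the set of
   vertices of [c] with a neighbour in [H].  By maximality of [c], the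
   successor [x+] of [x] in [X] is not in [X] (else insert a path through [H]
   between [x] and [x+]), and [x+ y+] is not an edge for distinct [x, y] in
   [X] (else reroute [c] through [H]).  Counting neighbours of [h] gives
   [s + t <= |H| + |X|].  If [|X| >= s], then [s] of the successors versus [H]
   plus the remaining successors is a bipartite hole.  If [|X| < s], counting
   neighbours of some [x+] shows that the vertices outside [H u X] number more
   than [t]; against [H] they form a bipartite hole. *)
From mathcomp Require Import all_boot zify.
Set Implicit Arguments. Unset Strict Implicit. Unset Printing Implicit Defensive.

Lemma exists_subset_card (T : finType) (A : {set T}) n :
  n <= #|A| -> exists2 B : {set T}, B \subset A & #|B| = n.
Proof.
move/card_geqP => [l [ul sl subl]]; exists [set x in l].
  by apply/subsetP => x; rewrite inE => /subl.
by rewrite cardsE (card_uniqP ul).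
Qed.

Lemma next_head (T : eqType) (x : T) p : next (x :: p) x = head x p.
Proof. by case: p => [|y p] /=; rewrite eqxx. Qed.

Lemma next_cat (T : eqType) (x : T) p q : uniq (p ++ x :: q) ->
  next (p ++ x :: q) x = head x (q ++ p).
Proof.
move=> U; rewrite -(next_rot (size p) U) rot_size_cat.
by rewrite cat_cons next_head.
Qed.

Lemma path_all (T : Type) (r : rel T) (a : pred T) x p :
  (forall y z, r y z -> a z) -> a x -> path r x p -> all a (x :: p).
Proof.
move=> ra; elim: p x => [|y p IH] x ax /=; first by rewrite ax.
by case/andP=> rxy pyp; rewrite ax; apply: IH pyp; apply: ra rxy.
Qed.

Section CycleSurgery.
Variables (V : finType) (e : rel V).

Lemma longer_cycle_insert (c : seq V) x p : uniq c -> cycle e c -> x \in c ->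
  p != [::] -> uniq p -> all (fun v => v \notin c) p ->
  path e x p -> e (last x p) (next c x) ->
  exists c', [/\ uniq c', cycle e c' & size c < size c'].
Proof.
move=> Uc Cc xc p0 Up Ap pxp elast.
case: (rot_to xc) => i q Hrot.
have Uq : uniq (x :: q) by rewrite -Hrot rot_uniq.
have Cq : cycle e (x :: q) by rewrite -Hrot rot_cycle.
have nx : next c x = head x q by rewrite -(next_rot i Uc) Hrot next_head.
have qc v : v \in x :: q -> v \in c by rewrite -Hrot mem_rot.
exists (x :: p ++ q); split.
- have pe : perm_eq (x :: p ++ q) (p ++ x :: q).
    by apply/permP => f; rewrite /= !count_cat /=; move: (f x); clear; lia.
  rewrite (perm_uniq pe) cat_uniq Up Uq andbT.
  apply/hasPn => v /qc vc; apply/negP => vp.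
  by move/allP: Ap => /(_ v vp); rewrite vc.
- rewrite /= rcons_cat cat_path pxp /=; rewrite nx in elast.
  case: q {Hrot Uq nx qc} Cq elast => [|z q] /= Cq elast; first by rewrite elast.
  by case/andP: Cq => _ ->; rewrite elast.
- rewrite -(size_rot i c) Hrot /= size_cat.
  by case: p p0 {Up Ap pxp elast} => //= *; lia.
Qed.

Hypothesis esym : symmetric e.

Lemma longer_cycle_cross (c : seq V) x y p : uniq c -> cycle e c ->
  x \in c -> y \in c -> x != y ->
  p != [::] -> uniq p -> all (fun v => v \notin c) p ->
  path e x p -> e (last x p) y ->
  next c x != y -> next c y != x -> e (next c x) (next c y) ->
  exists c', [/\ uniq c', cycle e c' & size c < size c'].
Proof.
move=> Uc Cc xc yc xy p0 Up Ap pxp elast nxy nyx exy.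
case: (rot_to xc) => i q Hrot.
have yq : y \in q.
  by move: yc; rewrite -(mem_rot i) Hrot inE eq_sym (negbTE xy).
move: Hrot; case/splitPr: yq => q1 q2 Hrot.
have Uq : uniq (x :: q1 ++ y :: q2) by rewrite -Hrot rot_uniq.
have Cq : cycle e (x :: q1 ++ y :: q2) by rewrite -Hrot rot_cycle.
have nx : next c x = head x (q1 ++ y :: q2).
  by rewrite -(next_rot i Uc) Hrot next_head.
have ny : next c y = head y (q2 ++ x :: q1).
  by rewrite -(next_rot i Uc) Hrot -cat_cons next_cat.
have qc v : v \in x :: q1 ++ y :: q2 -> v \in c by rewrite -Hrot mem_rot.
case: q1 Hrot Uq Cq nx ny qc => [|x' A] Hrot Uq Cq nx ny qc.
  by rewrite nx eqxx in nxy.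
case: q2 Hrot Uq Cq nx ny qc => [|y' B] Hrot Uq Cq nx ny qc.
  by rewrite ny eqxx in nyx.
rewrite /= in nx ny; rewrite nx ny in exy.
exists (x :: p ++ y :: rev (x' :: A) ++ y' :: B); split.
- have pe : perm_eq (x :: p ++ y :: rev (x' :: A) ++ y' :: B)
                    (p ++ x :: (x' :: A) ++ y :: y' :: B).
    apply/permP => f; rewrite /= !count_cat /= !count_cat count_rev /=.
    by move: (f x) (f y) (f x') (f y') (count f p) (count f A) (count f B);
      clear; lia.
  rewrite (perm_uniq pe) cat_uniq Up Uq andbT.
  apply/hasPn => v /qc vc; apply/negP => vp.
  by move/allP: Ap => /(_ v vp); rewrite vc.
- rewrite /= rcons_cat cat_path pxp /= elast /= rcons_cat cat_path.
  move: Cq; rewrite /= rcons_cat cat_path /= => /and3P [ex' pA /andP [eAy pB]].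
  have : path (fun u v => e v u) x' (rcons A y).
    by rewrite -(eq_path esym) rcons_path pA eAy.
  rewrite -rev_path last_rcons belast_rcons => ->.
  by rewrite rev_cons last_rcons exy /=; case/andP: pB.
- rewrite -(size_rot i c) Hrot /= !size_cat /= !size_cat size_rev /=.
  by case: p p0 {Up Ap pxp elast} => //= *; lia.
Qed.

End CycleSurgery.

Section Graph.
Variables (V : finType) (e : rel V).

Lemma mindeg_le_deg v : mindeg e <= deg e v.
Proof.
rewrite /mindeg; have : v \in index_enum V by rewrite mem_index_enum.
elim: (index_enum V) => [//|u r IH]; rewrite inE big_cons => /orP [/eqP<-|/IH].
  exact: geq_minl.
exact: leq_trans (geq_minr _ _).
Qed.

Hypothesis eirr : irreflexive e.

Lemma deg_lt_card (A B : {set V}) u : u \in A ->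
  [set w | e u w] \subset A :|: B -> deg e u < #|A| + #|B|.
Proof.
move=> uA sub; have : [set w | e u w] \subset (A :|: B) :\ u.
  apply/subsetP => w; rewrite inE => euw.
  rewrite in_setD1 (subsetP sub) ?inE // andbT.
  by apply: contraTneq euw => ->; rewrite eirr.
move/subset_leq_card; have := cardsD1 u (A :|: B); rewrite in_setU uA /=.
by have := leq_of_leqif (leq_card_setU A B); rewrite /deg; lia.
Qed.

Lemma edge_of_no_bhole s t (S T : {set V}) : ~~ has_bhole e s t ->
  [disjoint S & T] -> s <= #|S| -> t <= #|T| ->
  exists x y, [/\ x \in S, y \in T & e x y].
Proof.
move=> nohole dST /exists_subset_card [S' S'S cS'] /exists_subset_card [T' T'T cT'].
move/existsPn: nohole => /(_ S') /existsPn /(_ T').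
rewrite cS' cT' !eqxx (disjointW S'S T'T dST) /= => /forallPn [x].
rewrite negb_imply => /andP [xS' /forallPn [y]].
rewrite negb_imply negbK => /andP [yT' exy].
by exists x, y; rewrite (subsetP S'S) ?(subsetP T'T).
Qed.

Hypothesis esym : symmetric e.

Lemma has_bholeC s t : has_bhole e s t = has_bhole e t s.
Proof.
suff imp a b : has_bhole e a b -> has_bhole e b a.
  by apply/idP/idP => /imp.
case/existsP => S /existsP [T /and4P [dST cS cT noedge]].
apply/existsP; exists T; apply/existsP; exists S.
rewrite disjoint_sym dST cS cT /=.
apply/forallP => y; apply/implyP => yT; apply/forallP => x; apply/implyP => xS.
by rewrite esym; move/forallP/(_ x)/implyP/(_ xS)/forallP/(_ y)/implyP: noedge; apply.
Qed.

End Graph.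

Section LongestCycle.
Variables (V : finType) (e : rel V).
Hypotheses (esym : symmetric e) (eirr : irreflexive e).
Variable c : seq V.
Hypotheses (Uc : uniq c) (Cc : cycle e c).
Hypothesis c_longest : forall c', uniq c' -> cycle e c' -> size c' <= size c.

Lemma no_longer_cycle : ~ exists c', [/\ uniq c', cycle e c' & size c < size c'].
Proof. by case=> c' [Uc' Cc']; rewrite ltnNge c_longest. Qed.

Variables (s t : nat).
Hypotheses (s_gt0 : 0 < s) (s_le_t : s <= t) (no_hole : ~~ has_bhole e s t).
Hypothesis deg_ge : forall v, s + t <= (deg e v).+1.

Section Component.
Variable h : V.
Hypothesis hNc : h \notin c.

Definition off_cycle := [rel a b | [&& e a b, a \notin c & b \notin c]].
Definition comp := [set u | connect off_cycle h u].
Definition attach := [set x in c | [exists u in comp, e u x]].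

Lemma off_cycle_notin a b : off_cycle a b -> b \notin c.
Proof. by case/and3P. Qed.

Lemma h_in_comp : h \in comp.
Proof. by rewrite inE connect0. Qed.

Lemma comp_notin u : u \in comp -> u \notin c.
Proof.
rewrite inE => /connectP [p hp ->].
by have /allP := path_all off_cycle_notin hNc hp; apply; apply: mem_last.
Qed.

Lemma comp_closed u w : u \in comp -> e u w -> w \notin c -> w \in comp.
Proof.
move=> uC euw wNc; have uNc := comp_notin uC; move: uC; rewrite !inE => hu.
by apply: connect_trans hu (connect1 _); rewrite /= euw uNc wNc.
Qed.

Lemma comp_path u w : u \in comp -> w \in comp -> exists p,
  [/\ uniq (u :: p), all (fun v => v \notin c) (u :: p), path e u p & last u p = w].
Proof.
move=> uC wC; have uNc := comp_notin uC.
have : connect off_cycle u w.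
  have offC : symmetric off_cycle.
    by move=> a b /=; rewrite esym [(a \notin c) && _]andbC.
  move: uC wC; rewrite !inE (sym_connect_sym offC); exact: connect_trans.
case/connectP => p up ->; case: (shortenP up) => p' up' Up' _.
exists p'; split => //.
  exact: path_all off_cycle_notin uNc up'.
by apply: sub_path up' => a b /and3P [].
Qed.

Lemma attachP x :
  reflect (x \in c /\ exists2 u, u \in comp & e u x) (x \in attach).
Proof.
rewrite inE; apply: (iffP andP) => [[xc /existsP [u /andP [uC eux]]] | [xc [u uC eux]]].
  by split=> //; exists u.
by split=> //; apply/existsP; exists u; rewrite uC.
Qed.

Lemma next_attach_notin x : x \in attach -> next c x \notin attach.
Proof.
case/attachP => xc [u uC eux]; apply/negP => /attachP [_ [w wC ewx]].
have [p [Up Ap pup lp]] := comp_path uC wC.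
apply: no_longer_cycle; apply: (longer_cycle_insert Uc Cc xc _ Up Ap) => //=.
  by rewrite esym eux.
by rewrite lp.
Qed.

Lemma next_attach_nonadj x y : x \in attach -> y \in attach -> x != y ->
  ~~ e (next c x) (next c y).
Proof.
move=> xA yA xy; apply/negP => exy.
have nxy : next c x != y by apply: contraNneq (next_attach_notin xA) => ->.
have nyx : next c y != x by apply: contraNneq (next_attach_notin yA) => ->.
case/attachP: xA => xc [u uC eux]; case/attachP: yA => yc [w wC ewy].
have [p [Up Ap pup lp]] := comp_path uC wC.
apply: no_longer_cycle.
apply: (longer_cycle_cross esym Uc Cc xc yc xy _ Up Ap _ _ nxy nyx exy) => //=.
  by rewrite esym eux.
by rewrite lp.
Qed.

Definition succ_attach := [set next c x | x in attach].

Lemma card_succ_attach : #|succ_attach| = #|attach|.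
Proof. exact/card_imset/(can_inj (prev_next Uc)). Qed.

Lemma succ_attach_notin z : z \in succ_attach -> z \in c /\ z \notin attach.
Proof.
case/imsetP => x xA ->; split; last exact: next_attach_notin.
by rewrite mem_next; case/attachP: xA.
Qed.

Lemma succ_attach_nonadj_comp u z : u \in comp -> z \in succ_attach -> ~~ e u z.
Proof.
move=> uC /succ_attach_notin [zc zNA]; apply: contra zNA => euz.
by apply/attachP; split=> //; exists u.
Qed.

Lemma comp_disjoint_succ_attach : [disjoint comp & succ_attach].
Proof.
rewrite disjoints_subset; apply/subsetP => z zC; rewrite inE.
by apply: contraNN (comp_notin zC) => /succ_attach_notin [].
Qed.

Lemma nbr_comp_sub : [set w | e h w] \subset comp :|: attach.
Proof.
apply/subsetP => w; rewrite inE in_setU => ehw.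
have [wc | wNc] := boolP (w \in c).
  by apply/orP; right; apply/attachP; split=> //; exists h; rewrite ?h_in_comp.
by rewrite (comp_closed h_in_comp ehw wNc).
Qed.

Lemma nbr_succ_attach_sub z : z \in succ_attach ->
  [set w | e z w] \subset ~: (comp :|: attach) :|: attach.
Proof.
move=> zS; apply/subsetP => w; rewrite inE !in_setU in_setC in_setU => ezw.
case: (boolP (w \in attach)) => [_|_]; rewrite ?orbT // !orbF.
by apply: contraTN ezw => /succ_attach_nonadj_comp/(_ zS); rewrite esym.
Qed.

Lemma comp_attach_large : s + t <= #|comp| + #|attach|.
Proof.
by have := deg_lt_card eirr h_in_comp nbr_comp_sub; have := deg_ge h; lia.
Qed.

Lemma attach_lt : #|attach| < s.
Proof.
rewrite ltnNge; apply/negP => s_le_A.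
have [S0 S0sub cS0] : exists2 S0 : {set V}, S0 \subset succ_attach & #|S0| = s.
  by apply: exists_subset_card; rewrite card_succ_attach.
pose T := comp :|: (succ_attach :\: S0).
have dS0T : [disjoint S0 & T].
  rewrite disjoints_subset; apply/subsetP => x xS0.
  rewrite in_setC in_setU in_setD xS0 /= orbF.
  by apply: contraTN (subsetP S0sub x xS0) => /(disjointFr comp_disjoint_succ_attach) ->.
have cT : #|T| = #|comp| + (#|attach| - s).
  rewrite cardsU cardsD (setIidPr S0sub) cS0 card_succ_attach.
  rewrite (disjoint_setI0 (disjointWr (subsetDl _ _) comp_disjoint_succ_attach)).
  by rewrite cards0 subn0.
have [x [y [xS0 yT exy]]] : exists x y, [/\ x \in S0, y \in T & e x y].
  apply: (edge_of_no_bhole no_hole dS0T); first by rewrite cS0.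
  by rewrite cT; have := comp_attach_large; lia.
have xS := subsetP S0sub x xS0.
case/setUP: yT => [yC | /setDP [yS yNS0]].
  by move: (succ_attach_nonadj_comp yC xS); rewrite esym exy.
case/imsetP: xS => x1 x1A Ex; case/imsetP: yS => y1 y1A Ey.
have x1y1 : x1 != y1 by apply: contraNneq yNS0 => E; rewrite Ey -E -Ex.
by move: (next_attach_nonadj x1A y1A x1y1); rewrite -Ex -Ey exy.
Qed.

Lemma attach_eq0 : attach = set0.
Proof.
apply/eqP; apply/set0Pn => -[x0 x0A].
pose W := ~: (comp :|: attach).
have zS : next c x0 \in succ_attach by apply: imset_f.
have zW : next c x0 \in W.
  have [zc zNA] := succ_attach_notin zS.
  by rewrite in_setC in_setU negb_or zNA andbT; apply: contraL zc; apply: comp_notin.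
have W_large : s + t <= #|W| + #|attach|.
  by have := deg_lt_card eirr zW (nbr_succ_attach_sub zS); have := deg_ge (next c x0); lia.
have [w [u [wW uC ewu]]] : exists w u, [/\ w \in W, u \in comp & e w u].
  apply: (edge_of_no_bhole no_hole).
  - by rewrite disjoints_subset setCS subsetUl.
  - by have := attach_lt; lia.
  - by have := attach_lt; have := comp_attach_large; lia.
move: wW; rewrite in_setC in_setU negb_or => /andP [wNC wNA].
have [wc | wNc] := boolP (w \in c).
  by move: wNA; apply/negP/negPn/attachP; split=> //; exists u; rewrite // esym.
by rewrite (comp_closed uC _ wNc) // esym in wNC.
Qed.

End Component.

Lemma longest_cycle_spanning v0 : v0 \in c -> forall v, v \in c.
Proof.
move=> v0c v; apply: contraT => vNc.
have [/existsP [h /existsP [x /and3P [hNc xc ehx]]] | /existsPn no_exit] :=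
  boolP [exists h, exists x, [&& h \notin c, x \in c & e h x]].
  have : x \in attach h by apply/attachP; split=> //; exists h; rewrite ?h_in_comp.
  by rewrite (attach_eq0 hNc) inE.
have NcNc w x : w \notin c -> x \in c -> ~~ e w x.
  by move=> wNc xc; move/existsPn: (no_exit w) => /(_ x); rewrite wNc xc.
pose C := [set u in c].
have sub_C : [set w | e v0 w] \subset C :|: set0.
  apply/subsetP => w; rewrite inE setU0 inE => ev0w.
  by apply: contraLR ev0w => /NcNc/(_ v0c); rewrite esym.
have sub_NC : [set w | e v w] \subset ~: C :|: set0.
  apply/subsetP => w; rewrite inE setU0 !inE => evw.
  by apply: contraL evw => /(NcNc _ _ vNc).
have [x [y [xC yNC exy]]] : exists x y, [/\ x \in C, y \in ~: C & e x y].
  apply: (edge_of_no_bhole no_hole).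
  - by rewrite disjoints_subset setCK.
  - have := deg_lt_card eirr _ sub_C; rewrite inE => /(_ v0c).
    by have := deg_ge v0; rewrite cards0; lia.
  - have := deg_lt_card eirr _ sub_NC; rewrite !inE => /(_ vNc).
    by have := deg_ge v; rewrite cards0; lia.
by move: xC yNC; rewrite !inE => xc /NcNc/(_ xc); rewrite esym exy.
Qed.

End LongestCycle.

Lemma exists_longest_cycle (V : finType) (e : rel V) (c0 : seq V) :
  uniq c0 -> cycle e c0 -> exists c, [/\ uniq c, cycle e c, size c0 <= size c &
    forall c', uniq c' -> cycle e c' -> size c' <= size c].
Proof.
move=> Uc0 Cc0.
pose has_cycle n := [exists c : n.-tuple V, uniq c && cycle e c].
have has_c0 : exists n, has_cycle n.
  by exists (size c0); apply/existsP; exists (in_tuple c0); rewrite Uc0.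
have bounded n : has_cycle n -> n <= #|V|.
  by case/existsP => c /andP [Uc _]; rewrite -(size_tuple c) -(card_uniqP Uc) max_card.
case: (ex_maxnP has_c0 bounded) => n /existsP [c /andP [Uc Cc]] longest.
exists c; rewrite size_tuple; split=> //.
  by apply: longest; apply/existsP; exists (in_tuple c0); rewrite Uc0.
by move=> c' Uc' Cc'; apply: longest; apply/existsP; exists (in_tuple c'); rewrite Uc'.
Qed.

Lemma hamiltonian_of_no_bhole (V : finType) (e : rel V) s t :
  symmetric e -> irreflexive e -> 0 < s -> s <= t -> ~~ has_bhole e s t ->
  (forall v, s + t <= (deg e v).+1) -> 0 < #|V| -> hamiltonian e.
Proof.
move=> esym eirr s_gt0 s_le_t no_hole deg_ge /card_gt0P [v0 _].
have /card_gt0P [u] : 0 < deg e v0 by have := deg_ge v0; lia.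
rewrite inE => ev0u.
have Uc0 : uniq [:: v0; u] by rewrite /= inE andbT; apply: contraTneq ev0u => ->; rewrite eirr.
have Cc0 : cycle e [:: v0; u] by rewrite /= ev0u esym ev0u.
have [c [Uc Cc c_large c_longest]] := exists_longest_cycle Uc0 Cc0.
have [v1 v1c] : exists v1, v1 \in c.
  by case: c {Uc Cc c_longest} c_large => // v1 c _; exists v1; rewrite inE eqxx.
exists c; split=> // v.
exact: (longest_cycle_spanning esym eirr Uc Cc c_longest s_gt0 s_le_t no_hole deg_ge v1c).
Qed.

Theorem theorem2 (V : finType) (e : rel V) :
  symmetric e -> irreflexive e -> 3 <= #|V| ->
  bhn e <= mindeg e ->
  hamiltonian e.
Proof.
move=> esym eirr V_ge3; rewrite /bhn; case: ex_minnP => r /existsP [s].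
case/andP => s_gt0 no_hole _ r_le.
have s_le_r : s <= r by rewrite -ltnS ltn_ord.
have V_gt0 : 0 < #|V| by lia.
have deg_ge v : s + (r.+1 - s) <= (deg e v).+1.
  by have := leq_trans r_le (mindeg_le_deg e v); lia.
have [s_le_t | t_lt_s] := leqP s (r.+1 - s).
  exact: hamiltonian_of_no_bhole esym eirr s_gt0 s_le_t no_hole deg_ge V_gt0.
apply: (hamiltonian_of_no_bhole esym eirr _ (ltnW t_lt_s)) => //.
- by lia.
- by rewrite has_bholeC.
- by move=> v; rewrite addnC.
Qed.
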